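(* Let $(\mu,\varphi,\omega^*,\omega^\varepsilon)\in\mathbb F^\times\times\mathbb F^3$. For any $\kappa,\lambda,c\in\mathbb F^\times$, the quadruple $(\kappa\lambda,\mu\lambda,c,\lambda)$ is feasible for $(\mu,\varphi,\omega^*,\omega^\varepsilon)$ if and only if: (i) $\kappa$ is a root of $\frac{x^4}{\mu q}-\frac{\omega^\varepsilon+q^{-1}\varphi}{q+q^{-1}}x^3+(\omega^*-\mu q^{-1}-\mu^{-1}q)x^2-\frac{\omega^\varepsilon-q\varphi}{q+q^{-1}}x+\mu q$; (ii) $\lambda$ is a root of $\kappa\mu q x^6+\left(\kappa^{-1}\mu q-\frac{\omega^\varepsilon-q\varphi}{q+q^{-1}}\right)x^4+\left(\frac{\omega^\varepsilon+q^{-1}\varphi}{q+q^{-1}}-\kappa\mu^{-1}q^{-1}\right)x^2-\frac{1}{\kappa\mu q}$; (iii) $c$ is a root of $x^2-rx+1$, where $r=\frac{\varphi+(\kappa\lambda+\kappa^{-1}\lambda^{-1})(\mu\lambda q-\mu^{-1}\lambda^{-1}q^{-1})}{\lambda-\lambda^{-1}}$ if $\lambda^2\ne1$ and $r=\frac{\omega^\varepsilon-(\kappa\lambda+\kappa^{-1}\lambda^{-1})(\mu\lambda+\mu^{-1}\lambda^{-1})}{\lambda q+\lambda^{-1}q^{-1}}$ if $\lambda^2=1$.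
   Context: $\mathbb F$ is an algebraically closed field and $q\in\mathbb F^\times$ is a root of unity of order $d\notin\{1,2,4\}$ (so $q^4\ne1$). For $(a,b,c,\lambda)\in(\mathbb F^\times)^4$ and $(\mu,\varphi,\omega^*,\omega^\varepsilon)\in\mathbb F^\times\times\mathbb F^3$, $(a,b,c,\lambda)$ is called feasible for $(\mu,\varphi,\omega^*,\omega^\varepsilon)$ if $\mu=b\lambda^{-1}$, $\varphi=(c+c^{-1})(\lambda-\lambda^{-1})-(a+a^{-1})(bq-b^{-1}q^{-1})$, $\omega^*=(c+c^{-1})(a+a^{-1})+(b+b^{-1})(\lambda q+\lambda^{-1}q^{-1})$, and $\omega^\varepsilon=(a+a^{-1})(b+b^{-1})+(c+c^{-1})(\lambda q+\lambda^{-1}q^{-1})$. *)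

From HB Require Import structures.
From mathcomp Require Import all_boot all_order all_algebra all_field.
Set Implicit Arguments. Unset Strict Implicit. Unset Printing Implicit Defensive.
Import GRing.Theory.
Local Open Scope ring_scope.

Definition feasible (F : fieldType) (q : F) (a b c lam : F)
    (mu phi ws we : F) : Prop :=
  [/\ a != 0, b != 0, c != 0 & lam != 0] /\
  [/\ mu = b * lam^-1,
      phi = (c + c^-1) * (lam - lam^-1) - (a + a^-1) * (b * q - b^-1 * q^-1),
      ws = (c + c^-1) * (a + a^-1) + (b + b^-1) * (lam * q + lam^-1 * q^-1)
    & we = (a + a^-1) * (b + b^-1) + (c + c^-1) * (lam * q + lam^-1 * q^-1)].

Definition kappa_poly (F : fieldType) (q mu phi ws we : F) : {poly F} :=
  (mu * q)^-1 *: 'X^4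
  - ((we + q^-1 * phi) / (q + q^-1)) *: 'X^3
  + (ws - mu * q^-1 - mu^-1 * q) *: 'X^2
  - ((we - q * phi) / (q + q^-1)) *: 'X
  + (mu * q)%:P.

Definition lambda_poly (F : fieldType) (q mu phi ws we kappa : F) : {poly F} :=
  (kappa * mu * q) *: 'X^6
  + (kappa^-1 * mu * q - (we - q * phi) / (q + q^-1)) *: 'X^4
  + ((we + q^-1 * phi) / (q + q^-1) - kappa * mu^-1 * q^-1) *: 'X^2
  - ((kappa * mu * q)^-1)%:P.

Definition r_val (F : fieldType) (q mu phi ws we kappa lam : F) : F :=
  if lam ^+ 2 != 1 then
    (phi + (kappa * lam + kappa^-1 * lam^-1)
             * (mu * lam * q - mu^-1 * lam^-1 * q^-1)) / (lam - lam^-1)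
  else
    (we - (kappa * lam + kappa^-1 * lam^-1) * (mu * lam + mu^-1 * lam^-1))
      / (lam * q + lam^-1 * q^-1).

Definition c_poly (F : fieldType) (r : F) : {poly F} :=
  'X^2 - r *: 'X + 1.

From HB Require Import structures.
From mathcomp Require Import all_boot all_order all_algebra all_field.
From mathcomp Require Import ring.
Set Implicit Arguments. Unset Strict Implicit.
Import GRing.Theory.
Local Open Scope ring_scope.

(** Put [C = c + c^-1] and let [dphi], [dws], [dwe] be the differences between
[phi], [ws], [we] and the values that feasibility of [(kappa lam, mu lam, c, lam)]
prescribes for them. At [lam] the [lambda] polynomial takes the value
[((q lam^4 + lam^2/q) dphi + (lam^2 - lam^4) dwe) / (q + q^-1)]; at [kappa] the
[kappa] polynomial takes the value [kappa^2 dws] plus a combination of [dphi]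
and [dwe]; and [c] is a root of [x^2 - r x + 1] iff [r = C], which means
[dphi = 0] when [lam^2 != 1] and [dwe = 0] when [lam^2 = 1]. In either case the
[lambda] polynomial then forces the other difference to vanish, and the [kappa]
polynomial forces [dws = 0]. *)

Section FeasibleValues.
Variables (F : fieldType) (q : F).

Definition phi_of (a b C lam : F) : F :=
  C * (lam - lam^-1) - (a + a^-1) * (b * q - b^-1 * q^-1).
Definition ws_of (a b C lam : F) : F :=
  C * (a + a^-1) + (b + b^-1) * (lam * q + lam^-1 * q^-1).
Definition we_of (a b C lam : F) : F :=
  (a + a^-1) * (b + b^-1) + C * (lam * q + lam^-1 * q^-1).

Lemma feasible_scaledE (mu kappa lam c phi ws we : F) :
    mu != 0 -> kappa != 0 -> lam != 0 -> c != 0 ->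
  feasible q (kappa * lam) (mu * lam) c lam mu phi ws we <->
  [/\ phi = phi_of (kappa * lam) (mu * lam) (c + c^-1) lam,
      ws = ws_of (kappa * lam) (mu * lam) (c + c^-1) lam
    & we = we_of (kappa * lam) (mu * lam) (c + c^-1) lam].
Proof.
move=> mu0 kappa0 lam0 c0; split=> [[_ [_ -> -> ->]] // | [-> -> ->]].
by split; [split; rewrite ?mulf_neq0 | split; rewrite ?mulfK].
Qed.

End FeasibleValues.

Lemma subr_invf_eq0 (F : fieldType) (x : F) :
  x != 0 -> (x - x^-1 == 0) = (x ^+ 2 == 1).
Proof.
by move=> x0; rewrite subr_eq0 -(inj_eq (mulfI x0)) mulfV // -expr2.
Qed.

Lemma divf_eq (F : fieldType) (x y z : F) :
  y != 0 -> (x / y == z) = (x - z * y == 0).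
Proof. by move=> y0; rewrite subr_eq0 -(inj_eq (mulIf y0)) divfK. Qed.

Lemma c_poly_rootE (F : fieldType) (r c : F) :
  c != 0 -> root (c_poly r) c = (r == c + c^-1).
Proof.
move=> c0; rewrite /root /c_poly !hornerE.
have -> : c ^+ 2 - r * c + 1 = (c + c^-1 - r) * c by field.
by rewrite mulf_eq0 (negbTE c0) orbF subr_eq0 eq_sym.
Qed.

Lemma prim_root_sqrD1_neq0 (R : idomainType) (d : nat) (q : R) :
  d.-primitive_root q -> d \notin [:: 1%N; 2%N; 4%N] -> q ^+ 2 + 1 != 0.
Proof.
move=> prim_q; apply: contraNN; rewrite addr_eq0 => /eqP q2.
have : (d %| 4)%N by rewrite (prim_order_dvd prim_q) (exprM q 2 2) q2 sqrrN expr1n.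
by case: d prim_q => [|[|[|[|[|]]]]] // /prim_order_gt0.
Qed.

Section RootsOfDefects.
Variables (F : fieldType) (q mu kappa lam C phi ws we : F).
Hypotheses (q_neq0 : q != 0) (q2D1_neq0 : q ^+ 2 + 1 != 0).
Hypotheses (mu_neq0 : mu != 0) (kappa_neq0 : kappa != 0) (lam_neq0 : lam != 0).

Local Notation dphi := (phi - phi_of q (kappa * lam) (mu * lam) C lam).
Local Notation dws := (ws - ws_of q (kappa * lam) (mu * lam) C lam).
Local Notation dwe := (we - we_of q (kappa * lam) (mu * lam) C lam).

Local Ltac field_nonzero :=
  field; rewrite -?expr2 ?q_neq0 ?q2D1_neq0 ?lam_neq0 ?mu_neq0 ?kappa_neq0.

Lemma q_addV_neq0 : q + q^-1 != 0.
Proof.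
have -> : q + q^-1 = (q ^+ 2 + 1) / q by field.
by rewrite mulf_neq0 ?invr_eq0.
Qed.

Lemma horner_kappa_poly : (kappa_poly q mu phi ws we).[kappa] =
  kappa ^+ 2 * dws
  + (dphi * (q * kappa - q^-1 * kappa ^+ 3) - dwe * (kappa ^+ 3 + kappa))
    / (q + q^-1).
Proof.
rewrite /kappa_poly /phi_of /ws_of /we_of.
rewrite !(hornerD, hornerN, hornerZ, hornerXn, hornerC, hornerX).
by field_nonzero.
Qed.

Lemma horner_lambda_poly : (lambda_poly q mu phi ws we kappa).[lam] =
  (dphi * (q * lam ^+ 4 + lam ^+ 2 / q) + dwe * (lam ^+ 2 - lam ^+ 4))
    / (q + q^-1).
Proof.
rewrite /lambda_poly /phi_of /we_of.
rewrite !(hornerD, hornerN, hornerZ, hornerXn, hornerC, hornerX).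
by field_nonzero.
Qed.

Lemma r_val_eq : (r_val q mu phi ws we kappa lam == C) =
  if lam ^+ 2 != 1 then dphi == 0 else dwe == 0.
Proof.
rewrite /r_val; case: ifPn => [lam2 | /negPn/eqP lam2].
  have den : lam - lam^-1 != 0 by rewrite subr_invf_eq0.
  by rewrite divf_eq //; congr (_ == 0); rewrite /phi_of; field_nonzero.
have lamV : lam^-1 = lam by apply: (mulfI lam_neq0); rewrite mulfV // -expr2 lam2.
have den : lam * q + lam^-1 * q^-1 != 0.
  by rewrite lamV -mulrDr mulf_neq0 ?q_addV_neq0.
by rewrite divf_eq //; congr (_ == 0); rewrite /we_of; field_nonzero.
Qed.

Lemma values_eq_roots :
  [/\ phi = phi_of q (kappa * lam) (mu * lam) C lam,
      ws = ws_of q (kappa * lam) (mu * lam) C lam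
    & we = we_of q (kappa * lam) (mu * lam) C lam] <->
  [/\ root (kappa_poly q mu phi ws we) kappa,
      root (lambda_poly q mu phi ws we kappa) lam
    & r_val q mu phi ws we kappa lam == C].
Proof.
rewrite /root horner_kappa_poly horner_lambda_poly r_val_eq.
split=> [[-> -> ->] | [root_kappa root_lam r_eq]].
  by rewrite !subrr !(mul0r, mulr0, addr0, subr0) eqxx; case: ifP.
have [/subr0_eq dphi0 /subr0_eq dwe0] : dphi = 0 /\ dwe = 0.
  move: root_lam; case: ifPn r_eq => [lam2 /eqP dphi0 | /negPn/eqP lam2 /eqP dwe0].
    rewrite dphi0 mul0r add0r mulf_eq0 invr_eq0 (negbTE q_addV_neq0) orbF.
    have -> : lam ^+ 2 - lam ^+ 4 = lam ^+ 2 * (1 - lam ^+ 2) by ring.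
    have lam_factor_neq0 : lam ^+ 2 * (1 - lam ^+ 2) != 0.
      by rewrite mulf_neq0 ?expf_neq0 // subr_eq0 eq_sym.
    by rewrite mulf_eq0 (negbTE lam_factor_neq0) orbF => /eqP.
  have lam4 : lam ^+ 4 = 1 by rewrite (exprM lam 2 2) lam2 expr1n.
  rewrite dwe0 lam2 lam4 mul0r addr0 mulr1 mul1r mulfK ?q_addV_neq0 //.
  by move/eqP.
move: root_kappa; rewrite dphi0 dwe0 !(subrr, mul0r, addr0).
by rewrite mulf_eq0 expf_eq0 (negbTE kappa_neq0) /= subr_eq0 => /eqP.
Qed.

End RootsOfDefects.

Theorem theorem5p1 (F : closedFieldType) (q : F) (d : nat)
    (hq : d.-primitive_root q) (hd : d \notin [:: 1%N; 2%N; 4%N])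
    (mu phi ws we : F) (hmu : mu != 0)
    (kappa lam c : F) (hk : kappa != 0) (hl : lam != 0) (hc : c != 0) :
  feasible q (kappa * lam) (mu * lam) c lam mu phi ws we <->
  [/\ root (kappa_poly q mu phi ws we) kappa,
      root (lambda_poly q mu phi ws we kappa) lam
    & root (c_poly (r_val q mu phi ws we kappa lam)) c].
Proof.
have q_neq0 : q != 0 by rewrite (prim_root_eq0 hq) -lt0n (prim_order_gt0 hq).
have q2D1_neq0 := prim_root_sqrD1_neq0 hq hd.
rewrite feasible_scaledE // c_poly_rootE //.
exact: values_eq_roots.
Qed.
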